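(* Let $p,r,n$ be natural numbers with $p+r\le n$, and let $\sigma$ be the involution of $\mathrm{Match}(\mathcal G_n)_{p,r}$ induced by reflecting $\mathcal G_n$ across its vertical axis of symmetry. Then $$\binom{n-r}{p}_{-1}\binom{n+1-p}{r}_{-1}=\big|\{P\in\mathrm{Match}(\mathcal G_n)_{p,r}:\sigma(P)=P\}\big|.$$
   Context: $\mathcal G_n$ ($n\ge0$) is a horizontal row of $2n+1$ unit square tiles $G_{-n},\dots,G_n$ (left to right, consecutive tiles sharing a vertical edge), where $G_i$ has face weight $1$ if $i+n$ is even and $2$ if $i+n$ is odd. $P_{min}$ is the perfect matching consisting of the top and bottom edges of all tiles of face weight $1$. For a perfect matching $P$, $\mathrm{Twist}(P)$ is the set of tiles in the interior of cycles of $P\triangle P_{min}$, and $y_i(P)$ the number of twisted tiles of face weight $i$. $\mathrm{Match}(\mathcal G_n)_{p,r}$ is the set of perfect matchings $P$ with $y_1(P)=n+1-r$ and $y_2(P)=p$; the reflection preserves $y_1,y_2$ and hence restricts to an involution $\sigma$ of this set. $\binom nk_{-1}$ is the value at $q=-1$ of the Gaussian binomial $\frac{(n)_q!}{(k)_q!(n-k)_q!}$, $(n)_q=1+q+\dots+q^{n-1}$. *)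

From HB Require Import structures.
From mathcomp Require Import all_boot all_order all_algebra.
Set Implicit Arguments. Unset Strict Implicit. Unset Printing Implicit Defensive.
Import Order.TTheory GRing.Theory Num.Theory.

Local Open Scope ring_scope.

Definition qint (m : nat) : {poly rat} := \sum_(i < m) 'X^i.
Definition qfact (m : nat) : {poly rat} := \prod_(1 <= i < m.+1) qint i.
Definition gauss_binom (m k : nat) : {poly rat} :=
  qfact m %/ (qfact k * qfact (m - k)).
Definition gauss_binom_m1 (m k : nat) : rat := (gauss_binom m k).[-1].

Local Close Scope ring_scope.

(* Columns of vertices are numbered 0 .. 2n+1 (left to right); tile G_i,
   i = -n..n, is stored as k = i+n in 0..2n and has corners in columns k,k+1.
   Face weight of tile k is 1 if k is even, 2 if k is odd.
   Vertices: (top? : bool, column).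
   Edges: inl (top?, k) = top (true) / bottom (false) horizontal edge of tile k;
          inr j = vertical edge in column j. *)
Definition vertex (n : nat) := (bool * 'I_(n.*2.+2))%type.
Definition edge (n : nat) := ((bool * 'I_(n.*2.+1)) + 'I_(n.*2.+2))%type.

Definition incident n (e : edge n) (v : vertex n) : bool :=
  match e with
  | inl (b, k) => (v.1 == b) && (((v.2 : nat) == k) || ((v.2 : nat) == k.+1))
  | inr j => (v.2 : nat) == j
  end.

Definition perfect_matching n (P : {set edge n}) : bool :=
  [forall v : vertex n, #|[set e in P | incident e v]| == 1].

(* P_min: top and bottom edges of all tiles of face weight 1 *)
Definition Pmin n : {set edge n} :=
  [set e : edge n | if e is inl (_, k) then ~~ odd k else false].

Definition symdiff n (A B : {set edge n}) : {set edge n} := (A :\: B) :|: (B :\: A).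

(* Edge set of the boundary of the rectangle formed by tiles a, ..., b-1
   (a < b); these are exactly the simple cycles of G_n. Its interior
   consists of tiles a .. b-1. *)
Definition rect_boundary n (a b : nat) (e : edge n) : bool :=
  match e with
  | inl (_, k) => (a <= k) && (k < b)
  | inr j => ((j : nat) == a) || ((j : nat) == b)
  end.

(* tile k lies in the interior of a cycle of P (symdiff) P_min *)
Definition twisted n (P : {set edge n}) (k : 'I_(n.*2.+1)) : bool :=
  [exists a : 'I_(n.*2.+2), exists b : 'I_(n.*2.+2),
     (a <= k) && (k < b) &&
     [forall e : edge n, rect_boundary a b e ==> (e \in symdiff P (Pmin n))]].

Definition Twist n (P : {set edge n}) : {set 'I_(n.*2.+1)} :=
  [set k | twisted P k].

(* y_1 : twisted tiles of face weight 1; y_2 : of face weight 2 *)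
Definition y1 n (P : {set edge n}) : nat := #|[set k in Twist P | ~~ odd k]|.
Definition y2 n (P : {set edge n}) : nat := #|[set k in Twist P | odd k]|.

Definition MatchG (n p r : nat) : {set {set edge n}} :=
  [set P : {set edge n} | perfect_matching P && (y1 P == n.+1 - r) && (y2 P == p)].

Definition refl_edge n (e : edge n) : edge n :=
  match e with
  | inl (b, k) => inl (b, rev_ord k)
  | inr j => inr (rev_ord j)
  end.

Definition sigma n (P : {set edge n}) : {set edge n} := [set refl_edge e | e in P].

(* A perfect matching P of G_n is determined by the sequence t of tiles
   whose two horizontal edges it contains: t has length 2n+1 and no two
   consecutive entries true, and P contains the vertical edges of the columns
   not touched by these tiles.  An edge lies in P (+) P_min iff it is a vertical
   edge of P or a horizontal edge of a tile k with t_k = odd k.  The vertical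
   edges of P sit exactly where the truth value of t_k = odd k changes, so the
   twisted tiles are the k with t_k = odd k: y_2 is the number of entries true
   at odd positions and n + 1 - y_1 the number at even positions.  Reflection
   reverses t, hence the invariant matchings are the palindromes
   t = s ++ behead (rev s) with s of length n + 1.  Splitting off the first
   entry of s gives a two-step recursion in n for their number, which is also
   satisfied by the product of Gaussian binomials, because at q = -1 the
   binomial [m, k] vanishes for k odd, m even and equals C(m/2, k/2) otherwise. *)

From HB Require Import structures.
From mathcomp Require Import all_boot all_order all_algebra.
From mathcomp Require Import zify ring.
Set Implicit Arguments. Unset Strict Implicit. Unset Printing Implicit Defensive.
Import Order.TTheory GRing.Theory Num.Theory.

(** * Gaussian binomials at q = -1 *)

Local Open Scope ring_scope.

Fixpoint qbinom (m k : nat) : {poly rat} :=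
  match m, k with
  | _, 0 => 1
  | 0, _.+1 => 0
  | m'.+1, k'.+1 => qbinom m' k' + 'X^(k'.+1) * qbinom m' k'.+1
  end.

Lemma qbinom_small m k : (m < k)%N -> qbinom m k = 0.
Proof.
elim: m k => [|m IH] [|k] //= ltmk.
by rewrite !IH ?mulr0 ?addr0 //; lia.
Qed.

Lemma qintD a b : qint (a + b) = qint a + 'X^a * qint b.
Proof.
rewrite /qint big_split_ord /= mulr_sumr; congr (_ + _).
by apply: eq_bigr => i _; rewrite exprD.
Qed.

Lemma qfact0 : qfact 0 = 1.
Proof. by rewrite /qfact big_geq. Qed.

Lemma qfactS m : qfact m.+1 = qfact m * qint m.+1.
Proof. by rewrite /qfact big_nat_recr. Qed.

Lemma qfact_neq0 m : qfact m != 0.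
Proof.
have qint_neq0 i : qint i.+1 != 0.
  apply/negP => /eqP /(congr1 (horner^~ 1)).
  rewrite /qint horner_sum hornerC.
  under eq_bigr => j _ do rewrite hornerXn expr1n.
  by rewrite sumr_const card_ord => /eqP; rewrite pnatr_eq0.
elim: m => [|m IH]; first by rewrite qfact0 oner_neq0.
by rewrite qfactS mulf_neq0.
Qed.

Lemma qbinom_qfact m k : (k <= m)%N ->
  qbinom m k * (qfact k * qfact (m - k)) = qfact m.
Proof.
elim: m k => [|m IH] [|k] //= lekm.
- by rewrite qfact0 !mulr1.
- by rewrite subn0 qfact0 !mul1r.
have qintS : qint m.+1 = qint k.+1 + 'X^(k.+1) * qint (m - k).
  by rewrite -qintD; congr qint; lia.
rewrite subSS qfactS (qfactS m) qintS.
have IHk := IH k lekm.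
have [ltkm | lemk] := ltnP k m; last first.
  have ekm : k = m by lia.
  subst k; rewrite subnn qfact0 mulr1 in IHk *.
  rewrite (qbinom_small (ltnSn m)) [qint 0]/qint big_ord0.
  by rewrite mulr0 !addr0 mulr1 mulrA IHk.
have emk : (m - k = (m - k.+1).+1)%N by lia.
have qfact_mk : qfact (m - k) = qfact (m - k.+1) * qint (m - k).
  by rewrite emk qfactS -emk.
have IHk1 := IH k.+1 ltkm; rewrite qfactS in IHk1.
rewrite qfact_mk in IHk *; rewrite mulrDr -{1}IHk -IHk1; ring.
Qed.

Lemma gauss_binomE m k : (k <= m)%N -> gauss_binom m k = qbinom m k.
Proof.
move=> lekm; rewrite /gauss_binom -(qbinom_qfact lekm) mulpK //.
by rewrite mulf_neq0 // qfact_neq0.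
Qed.

Local Close Scope ring_scope.

Definition binom_m1 (m k : nat) : nat :=
  if odd k && ~~ odd m then 0 else 'C(m./2, k./2).

Lemma qbinom_m1 m k : ((qbinom m k).[-1] = (binom_m1 m k)%:R)%R.
Proof.
elim: m k => [|m IH] [|k].
- by rewrite /= hornerC.
- rewrite /= horner0 /binom_m1 /= andbT; case: ifP => // /negbFE ok.
  by rewrite uphalf_half ok bin_small.
- by rewrite /= hornerC /binom_m1 /= bin0.
rewrite /= hornerD hornerM hornerXn !IH -signr_odd /binom_m1 /= !uphalf_half.
case: (odd k); case: (odd m);
  rewrite /= ?add0n ?add1n ?expr0 ?expr1 ?mul1r ?mulN1r ?mulr0 ?addr0 ?add0r ?subrr //.
by rewrite binS natrD addrC.
Qed.

Lemma gauss_binom_m1E m k : k <= m -> gauss_binom_m1 m k = ((binom_m1 m k)%:R)%R.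
Proof. by move=> lekm; rewrite /gauss_binom_m1 gauss_binomE // qbinom_m1. Qed.

Lemma binom_m1_small m k : m < k -> binom_m1 m k = 0.
Proof.
rewrite /binom_m1 => ltmk; case: ifP => // /negbT; rewrite negb_and negbK => parity.
rewrite bin_small //; lia.
Qed.

Lemma binom_m1SS m k :
  binom_m1 m.+2 k = binom_m1 m k + (if 1 < k then binom_m1 m (k - 2) else 0).
Proof.
case: k => [|[|k]]; rewrite /binom_m1 /= ?addn0 ?bin0 ?negbK // !subSS subn0.
by case: (odd k); case: (odd m) => //=; rewrite binS addnC.
Qed.

Definition binom_m1_prod n r p := binom_m1 (n - r) p * binom_m1 (n.+1 - p) r.

Lemma binom_m1_prodSS n r p :
  binom_m1_prod n.+2 r p =
  binom_m1_prod n.+1 p r + (if 1 < r then binom_m1_prod n (r - 2) p else 0).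
Proof.
rewrite /binom_m1_prod.
have [lepn | ltnp] := leqP p n.+1.
  have -> : n.+3 - p = (n.+1 - p).+2 by lia.
  rewrite binom_m1SS mulnDr mulnC; congr (_ + _).
  case: ltnP => [lt1r | _]; last by rewrite muln0.
  by have -> : n - (r - 2) = n.+2 - r by lia.
have [lepnr | ltnrp] := leqP p (n.+2 - r).
  have [-> ->] : r = 0 /\ p = n.+2 by lia.
  have binom_m1_0 x : binom_m1 x 0 = 1 by rewrite /binom_m1 bin0.
  by rewrite /= !binom_m1_0 muln1 mul1n addn0.
rewrite (binom_m1_small ltnrp) mul0n muln0.
by case: ifP => // lt1r; rewrite binom_m1_small ?mul0n //; lia.
Qed.

(** * Sparse palindromes *)

Fixpoint bool_seqs m : seq (seq bool) :=
  if m is m'.+1 then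
    [seq false :: s | s <- bool_seqs m'] ++ [seq true :: s | s <- bool_seqs m']
  else [:: [::]].

Lemma bool_seqsS m :
  bool_seqs m.+1 = [seq false :: s | s <- bool_seqs m] ++ [seq true :: s | s <- bool_seqs m].
Proof. by []. Qed.

Lemma mem_bool_seqs m s : (s \in bool_seqs m) = (size s == m).
Proof.
elim: m s => [|m IH] [|a s] //=; rewrite mem_cat.
  by apply/negbTE; rewrite negb_or; apply/andP; split; apply/mapP => -[].
have cons_inj (b : bool) : injective (cons b) by move=> x y [].
rewrite eqSS -IH; case: a; rewrite !(mem_map (cons_inj _)).
  by case: mapP => [[? _ /eqP]|].
by case: mapP => [[? _ /eqP]|]; rewrite ?orbF.
Qed.

Lemma uniq_bool_seqs m : uniq (bool_seqs m).
Proof.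
have cons_inj (b : bool) : injective (cons b) by move=> x y [].
elim: m => [|m IH] //=; rewrite cat_uniq !(map_inj_uniq (cons_inj _)) IH /= andbT.
by apply/hasPn => _ /mapP [s _ ->]; apply/mapP => -[].
Qed.

Fixpoint sparse (t : seq bool) : bool :=
  if t is a :: t' then ~~ (a && head false t') && sparse t' else true.

Lemma sparseP t : reflect (forall k, ~~ (nth false t k && nth false t k.+1)) (sparse t).
Proof.
elim: t => [|a t IH] /=; first by apply: ReflectT => k; rewrite nth_nil.
rewrite -nth0; apply: (iffP andP) => [[ht /IH st] [|k] | st]; [exact: ht | exact: st | split].
- exact: (st 0).
- by apply/IH => k; apply: (st k.+1).
Qed.

Lemma sparse_rcons t a : sparse (rcons t a) = sparse t && ~~ (last false t && a).
Proof.
elim: t => [|b t IH] /=; first by rewrite andbF.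
by rewrite IH; case: t IH => [|c t] _ /=; rewrite ?andbT ?andbF ?andbA.
Qed.

Definition trues_at (b : bool) (t : seq bool) : nat :=
  \sum_(0 <= k < size t) ((odd k == b) && nth false t k).

Lemma trues_at_nil b : trues_at b [::] = 0.
Proof. by rewrite /trues_at big_geq. Qed.

Lemma trues_at_cons b a t : trues_at b (a :: t) = (a && ~~ b) + trues_at (~~ b) t.
Proof.
rewrite /trues_at big_nat_recl //=; congr (_ + _); first by case: a; case: b.
by apply: eq_bigr => k _; case: (odd k); case: b.
Qed.

Lemma trues_at_rcons b t a :
  trues_at b (rcons t a) = trues_at b t + (a && (odd (size t) == b)).
Proof.
rewrite /trues_at size_rcons big_nat_recr //= nth_rcons ltnn eqxx andbC.
by congr (_ + _); apply: eq_big_nat => k /andP [_ ltkt]; rewrite nth_rcons ltkt.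
Qed.

Definition mirror (s : seq bool) : seq bool := s ++ behead (rev s).

Lemma size_mirror s : size (mirror s) = size s + (size s).-1.
Proof. by rewrite /mirror size_cat size_behead size_rev. Qed.

Lemma size_mirror_half n s : size s = n.+1 -> size (mirror s) = n.*2.+1.
Proof. by move=> sz_s; rewrite size_mirror sz_s addSn addnn. Qed.

Lemma mirror_cons a s : s != [::] -> mirror (a :: s) = a :: rcons (mirror s) a.
Proof.
by case/lastP: s => [//|s x] _; rewrite /mirror rev_cons !rev_rcons /= rcons_cat.
Qed.

Lemma rev_mirror s : rev (mirror s) = mirror s.
Proof.
by case/lastP: s => [//|s x]; rewrite /mirror rev_rcons /= rev_cat revK rev_rcons cat_rcons.
Qed.

Lemma take_mirror s : take (size s) (mirror s) = s.
Proof. by rewrite /mirror take_cat ltnn subnn take0 cats0. Qed.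

Lemma mirror_take n t : size t = n.*2.+1 -> rev t = t -> mirror (take n.+1 t) = t.
Proof.
move=> sz_t rev_t; rewrite /mirror rev_take rev_t sz_t -addnn subSS addnK.
by rewrite -drop1 drop_drop add1n cat_take_drop.
Qed.

Definition sparse_of_weight r p t :=
  [&& sparse t, trues_at false t == r & trues_at true t == p].

Definition sym_count n r p := count (sparse_of_weight r p \o mirror) (bool_seqs n.+1).

Lemma sym_countSS n r p :
  sym_count n.+2 r p = sym_count n.+1 p r + (if 1 < r then sym_count n (r - 2) p else 0).
Proof.
have nonempty m (s : seq bool) : s \in bool_seqs m.+1 -> s != [::].
  by rewrite mem_bool_seqs -size_eq0 => /eqP ->.
rewrite /sym_count bool_seqsS count_cat !count_map; congr (_ + _).
  apply: eq_in_count => s /nonempty s0 /=.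
  rewrite mirror_cons // /sparse_of_weight /= sparse_rcons !trues_at_cons !trues_at_rcons /=.
  by rewrite !andbF !addn0 andbT [(_ == r) && _]andbC.
rewrite bool_seqsS count_cat !count_map.
rewrite [X in _ + X](@eq_in_count _ _ pred0) => [|s /nonempty s0]; last first.
  by rewrite /= !mirror_cons // /sparse_of_weight.
rewrite count_pred0 addn0.
rewrite (@eq_in_count _ _ (fun s => (1 < r) && sparse_of_weight (r - 2) p (mirror s))).
  by case: ifP => _ //; rewrite count_pred0.
move=> s s_in; have s0 := nonempty _ _ s_in; move: s_in; rewrite mem_bool_seqs => /eqP sz_s /=.
have odd_m : odd (size (mirror s)) by rewrite (size_mirror_half sz_s) /= odd_double.
rewrite !mirror_cons // /sparse_of_weight /= !sparse_rcons last_rcons /= andbF andbT.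
rewrite !trues_at_cons !trues_at_rcons /= size_rcons /= odd_m /=.
rewrite !addn0 !add0n addn1 add1n.
by case: r => [|[|r]] //=; rewrite ?andbF // andbT !eqSS subn2.
Qed.

Lemma sym_count_prod n r p : sym_count n r p = binom_m1_prod n r p.
Proof.
elim/ltn_ind: n r p => -[|[|n]] IH r p; last by rewrite sym_countSS binom_m1_prodSS !IH.
all: case: r => [|[|[|r]]]; case: p => [|[|p]];
  rewrite /sym_count /= /sparse_of_weight /mirror /rev /= !trues_at_cons !trues_at_nil;
  rewrite /binom_m1_prod ?sub0n ?subSS ?subn0 ?(@binom_m1_small 2 r.+3);
  by rewrite /binom_m1 /= ?if_same ?muln0 ?mul0n.
Qed.

(** * Perfect matchings as sparse sequences *)

Definition hrow n (P : {set edge n}) (b : bool) : seq bool :=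
  mkseq (fun k => (inl (b, inord k) : edge n) \in P) n.*2.+1.

Lemma size_hrow n (P : {set edge n}) b : size (hrow P b) = n.*2.+1.
Proof. exact: size_mkseq. Qed.

Lemma nth_hrow n (P : {set edge n}) b (k : 'I_n.*2.+1) :
  nth false (hrow P b) k = ((inl (b, k) : edge n) \in P).
Proof. by rewrite nth_mkseq // inord_val. Qed.

Lemma sum_nth_eq (t : seq bool) N (j : nat) : size t <= N ->
  \sum_(k < N) (nth false t k && (k == j :> nat)) = nth false t j.
Proof.
move=> le_t_N; transitivity (\sum_(k < N | k == j :> nat) (nth false t k : nat)).
  by rewrite [RHS]big_mkcond; apply: eq_bigr => k _; case: eqP; rewrite ?andbT ?andbF.
rewrite (big_ord1_eq _ (fun k => nth false t k : nat)).
by case: ltnP => // le_N_j; rewrite nth_default // (leq_trans le_t_N).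
Qed.

Lemma sum_nth_adjacent (t : seq bool) N (j : nat) : size t <= N ->
  \sum_(k < N) (nth false t k && ((j == k) || (j == k.+1))) =
  nth false (false :: t) j + nth false t j.
Proof.
move=> le_t_N.
have split_or k : nth false t k && ((j == k) || (j == k.+1)) =
    (nth false t k && (k == j.-1) && (0 < j)) + (nth false t k && (k == j)) :> nat.
  by case: (nth false t k) => //=; lia.
under eq_bigr => k _ do rewrite split_or.
rewrite big_split /= sum_nth_eq //; congr (_ + _); clear split_or.
case: j => [|j] /=; first by rewrite big1 // => k; rewrite andbF.
by under eq_bigr => k _ do rewrite andbT; rewrite sum_nth_eq.
Qed.

Lemma card_incident n (P : {set edge n}) b (j : 'I_n.*2.+2) :
  #|[set e in P | incident e (b, j)]| =
  nth false (false :: hrow P b) j + nth false (hrow P b) j + ((inr j : edge n) \in P).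
Proof.
rewrite -sum1_card big_mkcond big_sumType /=; congr (_ + _).
  pose F b' (k : 'I_n.*2.+1) :=
    (b == b') * (nth false (hrow P b') k && ((j == k :> nat) || (j == k.+1 :> nat))).
  rewrite (eq_bigr (fun x => F x.1 x.2)) => [|[b' k] _]; last first.
    by rewrite /F !inE /= nth_hrow; case: (_ \in P); case: (b == b'); case: (_ || _).
  rewrite -pair_bigA big_bool /= {}/F -!big_distrr /= !sum_nth_adjacent ?size_hrow //.
  by case: b; rewrite /= ?mul1n ?mul0n ?addn0.
rewrite (bigD1 j) //= big1 ?addn0 => [|i ne_ij]; rewrite !inE /=.
  by rewrite eqxx andbT; case: (_ \in P).
by rewrite (_ : (j == i :> nat) = false) ?andbF // eq_sym; apply: negbTE.
Qed.

Lemma perfect_matchingP n (P : {set edge n}) :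
  reflect (forall b (j : 'I_n.*2.+2),
             nth false (false :: hrow P b) j + nth false (hrow P b) j
             + ((inr j : edge n) \in P) = 1)
          (perfect_matching P).
Proof.
apply: (iffP forallP) => [pm b j | pm [b j]]; last by apply/eqP; rewrite card_incident pm.
by apply/eqP; rewrite -card_incident pm.
Qed.

(* [nth false (false :: t) j] is entry [j - 1] of [t], and [false] for [j = 0]. *)
Definition vert_used (t : seq bool) (j : nat) : bool :=
  ~~ nth false (false :: t) j && ~~ nth false t j.

Definition matching_of n (t : seq bool) : {set edge n} :=
  [set e : edge n | match e with inl (_, k) => nth false t k | inr j => vert_used t j end].

Lemma hrow_matching_of n t b : size t = n.*2.+1 -> hrow (matching_of n t) b = t.
Proof.
move=> sz_t; apply: (@eq_from_nth _ false); rewrite size_hrow // => k lt_k.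
by rewrite nth_mkseq // inE /= inordK.
Qed.

Lemma perfect_matching_of n t : size t = n.*2.+1 -> sparse t -> perfect_matching (matching_of n t).
Proof.
move=> sz_t /sparseP st; apply/perfect_matchingP => b j; rewrite hrow_matching_of // inE /=.
rewrite /vert_used; case: (nat_of_ord j) => [|i] /=; first by case: (nth false t 0).
by move: (st i); case: (nth false t i); case: (nth false t i.+1).
Qed.

Section PerfectMatching.

Variables (n : nat) (P : {set edge n}).
Hypothesis pm : perfect_matching P.

Lemma sparse_hrow b : sparse (hrow P b).
Proof.
apply/sparseP => k; have [lt_k1 | le_k1] := ltnP k.+1 n.*2.+1; last first.
  by rewrite [nth _ _ k.+1]nth_default ?andbF // size_hrow.
have := (perfect_matchingP _ pm) b (inord k.+1); rewrite inordK /=; lia.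
Qed.

Lemma hrow_bottom : hrow P false = hrow P true.
Proof.
have /perfect_matchingP pmP := pm.
apply: (@eq_from_nth _ false); rewrite ?size_hrow // => k.
elim: k => [|k IH] lt_k.
  by have := pmP false (inord 0); have := pmP true (inord 0); rewrite inordK /=; lia.
have := pmP false (inord k.+1); have := pmP true (inord k.+1).
rewrite inordK /= ?IH; lia.
Qed.

Lemma vert_used_hrow (j : 'I_n.*2.+2) : ((inr j : edge n) \in P) = vert_used (hrow P true) j.
Proof.
have := (perfect_matchingP _ pm) true j; rewrite /vert_used.
by case: (_ \in P); case: (nth _ _ _); case: (nth _ _ _).
Qed.

Lemma matching_of_hrow : P = matching_of n (hrow P true).
Proof.
apply/setP => -[[b k]|j]; rewrite inE /= ?vert_used_hrow //.
by rewrite -nth_hrow; case: b; rewrite ?hrow_bottom.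
Qed.

End PerfectMatching.

(** * Twisted tiles *)

Lemma maximal_run (f : nat -> bool) N k : k < N -> f k ->
  exists a b, [/\ a <= k < b, b <= N, forall i, a <= i < b -> f i,
                  (a == 0) || ~~ f a.-1 & (b == N) || ~~ f b].
Proof.
move=> lt_kN fk.
have startP : exists a, (a <= k) && ((a == 0) || ~~ f a.-1) by exists 0.
have [a /andP [le_ak start] max_a] := ex_maxnP startP (fun a => @proj1 _ _ \o andP).
have stopP : exists b, (k < b) && ((b == N) || ~~ f b) by exists N; rewrite lt_kN eqxx.
have [b /andP [lt_kb stop] min_b] := ex_minnP stopP.
exists a, b; split; rewrite ?le_ak ?lt_kb //.
  by apply: min_b; rewrite lt_kN eqxx.
move=> i /andP [le_ai lt_ib]; apply/negPn/negP => nfi.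
have [lt_ik | le_ki] := ltnP i k.
  by have := max_a i.+1; rewrite lt_ik nfi orbT => /(_ isT); lia.
have [e_ik | ne_ik] := eqVneq i k; first by rewrite e_ik fk in nfi.
have lt_ki : k < i by rewrite ltn_neqAle eq_sym ne_ik.
by have := min_b i; rewrite lt_ki nfi orbT => /(_ isT); lia.
Qed.

Lemma vert_used_run_start t a : sparse t -> nth false t a == odd a ->
  (a == 0) || (nth false t a.-1 != odd a.-1) -> vert_used t a.
Proof.
move=> /sparseP st; rewrite /vert_used; case: a => [|i] /=; first by case: (nth false t 0).
by move: (st i); case: (nth false t i); case: (nth false t i.+1); case: (odd i).
Qed.

Lemma vert_used_run_stop t b : sparse t -> odd (size t) -> 0 < b ->
  nth false t b.-1 == odd b.-1 -> (b == size t) || (nth false t b != odd b) -> vert_used t b.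
Proof.
move=> /sparseP st odd_t; rewrite /vert_used.
case: b => [|i] //= _; have [e_it | ne_it] := eqVneq i.+1 (size t).
  rewrite (nth_default _ (_ : size t <= i.+1)) ?e_it // andbT => g_i _.
  by move: odd_t g_i; rewrite -e_it /=; case: (odd i); case: (nth false t i).
by move: (st i); case: (nth false t i); case: (nth false t i.+1); case: (odd i).
Qed.

Lemma mem_symdiff_Pmin n t (e : edge n) :
  (e \in symdiff (matching_of n t) (Pmin n)) =
  match e with inl (_, k) => nth false t k == odd k | inr j => vert_used t j end.
Proof.
move: e => -[[b k]|j]; rewrite !inE /=; last by rewrite andbF orbF.
by case: (nth _ _ _); case: (odd _).
Qed.

Lemma twisted_matching_of n t (k : 'I_n.*2.+1) : size t = n.*2.+1 -> sparse t ->
  twisted (matching_of n t) k = (nth false t k == odd k).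
Proof.
move=> sz_t st; apply/idP/idP => [| gk].
  case/existsP=> a /existsP [b /andP [/andP [le_ak lt_kb] /forallP bd]].
  by have := implyP (bd (inl (true, k))); rewrite mem_symdiff_Pmin /= le_ak lt_kb => /(_ isT).
have [a [b [/andP [le_ak lt_kb] le_bN run start stop]]] :=
  @maximal_run (fun i => nth false t i == odd i) _ _ (ltn_ord k) gk.
have lt_a : a < n.*2.+2 by lia.
have lt_b : b < n.*2.+2 by lia.
apply/existsP; exists (Ordinal lt_a); apply/existsP; exists (Ordinal lt_b).
rewrite /= le_ak lt_kb /=.
apply/forallP => -[[b' i]|j]; apply/implyP; rewrite mem_symdiff_Pmin /=; first exact: run.
rewrite -sz_t in stop; case/orP => /eqP ->.
  by apply: (vert_used_run_start st _ start); apply: run; lia.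
apply: (vert_used_run_stop st _ _ _ stop); first by rewrite sz_t /= odd_double.
  lia.
by apply: run; lia.
Qed.

Lemma card_set_sum N (f : pred 'I_N) : #|[set k | f k]| = \sum_(k < N) f k.
Proof. by rewrite -sum1_card big_mkcond; apply: eq_bigr => k _; rewrite inE; case: (f k). Qed.

Lemma sum_even n : \sum_(k < n.*2.+1) ~~ odd k = n.+1.
Proof.
elim: n => [|n IH]; first by rewrite big_ord1.
by rewrite doubleS 2!big_ord_recr /= IH odd_double /= addn0 addn1.
Qed.

Lemma y_matching_of n t : size t = n.*2.+1 -> sparse t ->
  y1 (matching_of n t) + trues_at false t = n.+1 /\ y2 (matching_of n t) = trues_at true t.
Proof.
move=> sz_t st; rewrite /y1 /y2 /trues_at sz_t !big_mkord -(sum_even n).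
split.
  have -> : [set k in Twist (matching_of n t) | ~~ odd k] =
            [set k : 'I_n.*2.+1 | ~~ nth false t k && ~~ odd k].
    by apply/setP => k; rewrite !inE twisted_matching_of //; case: (nth _ _ _); case: (odd _).
  rewrite card_set_sum -big_split; apply: eq_bigr => k _.
  by case: (nth _ _ _); case: (odd _).
have -> : [set k in Twist (matching_of n t) | odd k] =
          [set k : 'I_n.*2.+1 | odd k && nth false t k].
  by apply/setP => k; rewrite !inE twisted_matching_of //; case: (nth _ _ _); case: (odd _).
by rewrite card_set_sum; apply: eq_bigr => k _; case: (odd _).
Qed.

(** * The reflection *)

Lemma nth_rev_shift (t : seq bool) i : nth false (rev t) i = nth false (false :: t) (size t - i).
Proof.
have [lt_it | le_ti] := ltnP i (size t); last by rewrite nth_default ?size_rev // (eqP le_ti).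
by rewrite nth_rev // (_ : size t - i = (size t - i.+1).+1) //; lia.
Qed.

Lemma vert_used_rev t j : j <= size t -> vert_used (rev t) j = vert_used t (size t - j).
Proof.
move=> le_jt; rewrite /vert_used andbC nth_rev_shift; congr (_ && _).
case: j le_jt => [|j] le_jt /=; first by rewrite subn0 nth_default.
by rewrite nth_rev.
Qed.

Lemma refl_edgeK n : involutive (@refl_edge n).
Proof. by case => [[b k]|j] /=; rewrite rev_ordK. Qed.

Lemma sigma_matching_of n t : size t = n.*2.+1 -> sigma (matching_of n t) = matching_of n (rev t).
Proof.
move=> sz_t; rewrite /sigma (can_imset_pre _ (@refl_edgeK n)); apply/setP => -[[b k]|j].
  by rewrite !inE /= nth_rev sz_t.
by rewrite !inE /= vert_used_rev sz_t // -ltnS.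
Qed.

(** * Counting the invariant matchings *)

Lemma MatchG_hrow n p r (P : {set edge n}) : r <= n.+1 -> perfect_matching P ->
  (P \in MatchG n p r) = sparse_of_weight r p (hrow P true).
Proof.
move=> le_r pm; have st := sparse_hrow pm true.
have [y1E y2E] := y_matching_of (size_hrow P true) st; rewrite -matching_of_hrow // in y1E y2E.
rewrite inE pm /sparse_of_weight st y2E /=; congr (_ && _); apply/eqP/eqP; lia.
Qed.

Lemma card_sym_MatchG n p r : r <= n.+1 ->
  #|[set P in MatchG n p r | sigma P == P]| = sym_count n r p.
Proof.
move=> le_r.
set L := [seq matching_of n (mirror s) | s <- bool_seqs n.+1 & sparse_of_weight r p (mirror s)].
have uniq_L : uniq L.
  rewrite map_inj_in_uniq ?filter_uniq ?uniq_bool_seqs // => s1 s2.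
  rewrite !mem_filter !mem_bool_seqs => /andP [_ /eqP sz1] /andP [_ /eqP sz2].
  move=> /(congr1 (@hrow n ^~ true)).
  rewrite !hrow_matching_of ?(size_mirror_half sz1) ?(size_mirror_half sz2) //.
  by move=> /(congr1 (take n.+1)); rewrite -{1}sz1 -sz2 !take_mirror.
have -> : sym_count n r p = size L by rewrite size_map size_filter.
rewrite -(card_uniqP uniq_L).
apply: eq_card => P; rewrite inE; apply/andP/mapP => [[inM /eqP symP] | [s]].
  have pm : perfect_matching P by move: inM; rewrite inE => /andP [/andP []].
  have sz_t := size_hrow P true.
  have rev_t : rev (hrow P true) = hrow P true.
    move: symP; rewrite {1}(matching_of_hrow pm) sigma_matching_of //.
    move=> /(congr1 (@hrow n ^~ true)).
    by rewrite hrow_matching_of ?size_rev.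
  exists (take n.+1 (hrow P true)); last by rewrite mirror_take // -matching_of_hrow.
  rewrite mem_filter mem_bool_seqs size_takel ?sz_t ?ltnS -?addnn ?leq_addr //.
  by rewrite eqxx andbT mirror_take // -MatchG_hrow.
rewrite mem_filter mem_bool_seqs => /andP [wt /eqP sz_s] ->.
have sz_t := size_mirror_half sz_s.
have pm := perfect_matching_of sz_t (proj1 (andP wt)).
by rewrite MatchG_hrow // hrow_matching_of // sigma_matching_of // rev_mirror.
Qed.

Unset Implicit Arguments.

Theorem mainTheorem11 (p r n : nat) (hpr : (p + r <= n)%N) :
  (gauss_binom_m1 (n - r) p * gauss_binom_m1 (n.+1 - p) r)%R
  = (#|[set P in MatchG n p r | sigma P == P]|%:R : rat).
Proof.
rewrite card_sym_MatchG; last lia.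
rewrite sym_count_prod /binom_m1_prod natrM !gauss_binom_m1E //; lia.
Qed.
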